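(* Every branch of a minimal tree is itself a minimal tree (i.e., if $T$ is minimal and $H$ is a branch of $T$ with $|H|=k$, then $I(H)=m_k$).
   Context: A rooted tree $T$ is a finite tree with a distinguished vertex, its root; its order $|T|$ is its number of vertices. For vertices $u,v$, the infimum of $u$ and $v$ is the vertex common to the path from $u$ to the root and the path from $v$ to the root that is furthest from the root. A set $X\subseteq V(T)$ is infima closed if the infimum of any two elements of $X$ lies in $X$. $I(T)$ denotes the number of nonempty infima closed subsets of $V(T)$. For $n\ge1$, $m_n=\min\{I(T): T \text{ a rooted tree with } n \text{ vertices}\}$; a rooted tree $T$ with $I(T)=m_{|T|}$ is called minimal. A branch of $T$ is the subtree consisting of a vertex $v$ together with all its descendants, rooted at $v$. *)

From mathcomp Require Import all_boot.
Set Implicit Arguments. Unset Strict Implicit. Unset Printing Implicit Defensive.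

(* A rooted tree on a finite vertex type T is given by its root r and a
   parent map p : T -> T, with p r = r and every vertex reaching r by
   iterating p (edges are {v, p v} for v <> r). *)
Definition is_rtree (T : finType) (r : T) (p : T -> T) : bool :=
  (p r == r) && [forall v : T, iter #|T| p v == r].

Definition anc (T : finType) (p : T -> T) (u v : T) : bool :=
  [exists k : 'I_#|T|.+1, iter k p v == u].

Definition is_inf (T : finType) (p : T -> T) (u v w : T) : bool :=
  [&& anc p w u, anc p w v & [forall z : T, anc p z u && anc p z v ==> anc p z w]].

Definition inf_closed (T : finType) (p : T -> T) (X : {set T}) : bool :=
  [forall u in X, forall v in X, forall w : T, is_inf p u v w ==> (w \in X)].

Definition I (T : finType) (p : T -> T) : nat :=
  #|[set X : {set T} | (X != set0) && inf_closed p X]|.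

(* T is minimal: I(T) = m_{|T|} = min of I over rooted trees with |T| vertices.
   Since T itself is such a tree, this means I(T) <= I(T') for all of them. *)
Definition minimal (T : finType) (r : T) (p : T -> T) : Prop :=
  is_rtree r p /\
  forall (T' : finType) (r' : T') (p' : T' -> T'),
    is_rtree r' p' -> #|T'| = #|T| -> I p <= I p'.

Definition branch_type (T : finType) (p : T -> T) (v : T) : finType :=
  {u : T | anc p v u}.

Lemma anc_refl (T : finType) (p : T -> T) (v : T) : anc p v v.
Proof. by apply/existsP; exists ord0. Qed.

Definition branch_root (T : finType) (p : T -> T) (v : T) : branch_type p v :=
  exist _ v (anc_refl p v).

Definition branch_parent (T : finType) (p : T -> T) (v : T)
  (u : branch_type p v) : branch_type p v :=
  insubd (branch_root p v) (if val u == v then v else p (val u)).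

From mathcomp Require Import all_boot.
Set Implicit Arguments. Unset Strict Implicit. Unset Printing Implicit Defensive.

(* We count all infima closed sets, the empty one included
   ([n_inf_closed] = I + 1), which splits cleanly under grafting.  The key
   construction is grafting a rooted tree H below a vertex a of a rooted
   forest O.  An infima closed set of the graft splits into its parts Y in O
   and Z in H: Z is any infima closed set of H, Y is infima closed in O and,
   when Z is nonempty, also closed under infima with a.  Hence
   n_inf_closed (graft) = c1 + c2 * n_inf_closed H with c1, c2 depending only
   on (O, a) and c2 > 0 ([n_inf_closed_graft]), so grafts onto the same
   place compare as the grafted trees do ([graft_cancel]).  A tree T is,
   up to isomorphism (which preserves the count), its branch at v grafted
   onto the complement below the parent of v, unless v is the root and the
   branch is all of T.  Replacing the branch by any tree of its size then
   yields a tree of the size of T, and minimality of T transfers to the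
   branch. *)

Section Ancestry.
Variable T : finType.
Implicit Types (p : T -> T).

Lemma fconnect_iterP p x y : reflect (exists n, iter n p x = y) (fconnect p x y).
Proof.
apply: (iffP idP) => [xy|[n <-]]; last exact: fconnect_iter.
by exists (findex p x y); rewrite iter_findex.
Qed.

Lemma anc_fconnect p u w : anc p u w = fconnect p w u.
Proof.
apply/existsP/idP => [[k /eqP <-]|wu]; first exact: fconnect_iter.
have lt_wu : findex p w u < #|T|.+1.
  by apply: leq_trans (findex_max wu) _; rewrite ltnW // ltnS max_card.
by exists (Ordinal lt_wu); rewrite /= iter_findex.
Qed.

Lemma iter_fixed p r n : p r = r -> iter n p r = r.
Proof. by move=> pr; elim: n => //= n ->. Qed.

Lemma rtreeP r p : is_rtree r p <-> p r = r /\ forall x, fconnect p x r.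
Proof.
split=> [/andP[/eqP pr /forallP to_r]|[pr to_r]].
  by split=> // x; apply/fconnect_iterP; exists #|T|; apply/eqP.
apply/andP; split; first exact/eqP.
apply/forallP => x; apply/eqP.
have le_xr : findex p x r <= #|T|.
  by apply: ltnW; apply: leq_trans (findex_max (to_r x)) (max_card _).
by rewrite -(subnK le_xr) iterD iter_findex // iter_fixed.
Qed.

Lemma inf_closedP p (X : {set T}) :
  reflect (forall u v w, u \in X -> v \in X -> is_inf p u v w -> w \in X)
          (inf_closed p X).
Proof.
apply: (iffP forallP) => [cl u v w uX vX|cl u].
  move: (cl u); rewrite uX => /forallP/(_ v); rewrite vX.
  by move=> /forallP/(_ w)/implyP; apply.
apply/implyP => uX; apply/forallP => v; apply/implyP => vX.
by apply/forallP => w; apply/implyP; apply: cl.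
Qed.

Lemma inf_closed0 p : inf_closed p set0.
Proof. by apply/inf_closedP => u v w; rewrite inE. Qed.

Lemma is_infC p u v w : is_inf p u v w = is_inf p v u w.
Proof.
rewrite /is_inf andbCA; congr [&& _, _ & _].
by apply: eq_forallb => z; rewrite andbC.
Qed.

Definition n_inf_closed p := #|[set X : {set T} | inf_closed p X]|.

Lemma n_inf_closedE p : n_inf_closed p = (I p).+1.
Proof.
rewrite /n_inf_closed /I.
have -> : [set X : {set T} | inf_closed p X] =
          set0 |: [set X : {set T} | (X != set0) && inf_closed p X].
  by apply/setP => X; rewrite !inE; case: eqP => [->|] //=; rewrite inf_closed0.
by rewrite cardsU1 !inE eqxx.
Qed.

Lemma n_inf_closed_sum p : n_inf_closed p = \sum_(X : {set T}) inf_closed p X.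
Proof.
rewrite /n_inf_closed -sum1_card big_mkcond /=; apply: eq_bigr => X _.
by rewrite inE; case: inf_closed.
Qed.

End Ancestry.

Lemma leq_I_n_inf_closed (T1 T2 : finType) (p1 : T1 -> T1) (p2 : T2 -> T2) :
  (I p1 <= I p2) = (n_inf_closed p1 <= n_inf_closed p2).
Proof. by rewrite !n_inf_closedE ltnS. Qed.

Section Isomorphism.
Variables (T S : finType) (p : T -> T) (p' : S -> S) (f : T -> S) (g : S -> T).
Hypotheses (fK : cancel f g) (gK : cancel g f) (f_parent : forall u, f (p u) = p' (f u)).

Lemma iter_iso n u : f (iter n p u) = iter n p' (f u).
Proof. by elim: n => //= n <-; rewrite f_parent. Qed.

Lemma anc_iso u w : anc p' (f u) (f w) = anc p u w.
Proof.
rewrite !anc_fconnect.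
apply/fconnect_iterP/fconnect_iterP => -[n e]; exists n; last by rewrite -e iter_iso.
by apply: (can_inj fK); rewrite iter_iso.
Qed.

Lemma is_inf_iso u v w : is_inf p' (f u) (f v) (f w) = is_inf p u v w.
Proof.
rewrite /is_inf !anc_iso; congr [&& _, _ & _].
apply/forallP/forallP => [all_z z|all_x z]; first by have := all_z (f z); rewrite !anc_iso.
by rewrite -(gK z) !anc_iso.
Qed.

Lemma inf_closed_iso (Y : {set S}) :
  inf_closed p' Y = inf_closed p [set x | f x \in Y].
Proof.
apply/inf_closedP/inf_closedP => cl u v w.
  by rewrite !inE -is_inf_iso; apply: cl.
rewrite -(gK u) -(gK v) -(gK w) is_inf_iso => uY vY inf_w.
by have := cl _ _ _ _ _ inf_w; rewrite !inE; apply.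
Qed.

Lemma n_inf_closed_iso : n_inf_closed p' = n_inf_closed p.
Proof.
rewrite !n_inf_closed_sum (reindex (fun X : {set T} => [set y | g y \in X])) /=.
  apply: eq_bigr => X _; rewrite inf_closed_iso.
  by congr (nat_of_bool (inf_closed _ _)); apply/setP => x; rewrite !inE fK.
exists (fun Y : {set S} => [set x | f x \in Y]) => X _;
  by apply/setP => x; rewrite !inE ?fK ?gK.
Qed.

End Isomorphism.

(* Infima between the two
   parts are infima with [a] computed inside O, so an infima closed set of the
   graft is a pair (Y, Z) where Z is arbitrary infima closed in H and Y is
   infima closed in O, and moreover closed under infima with [a] unless Z is
   empty. *)
Section Graft.
Variables (O H : finType) (q : O -> O) (a : O) (ph : H -> H) (h : H).

Definition graft (c : O + H) : O + H :=
  match c with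
  | inl o => inl (q o)
  | inr x => if x == h then inl a else inr (ph x)
  end.

Hypotheses (ph_root : ph h = h) (to_root : forall x, fconnect ph x h).

Lemma iter_graft_inl n o : iter n graft (inl o) = inl (iter n q o).
Proof. by elim: n => //= n ->. Qed.

Lemma iter_graft_inr n x :
  iter n graft (inr x) = inr (iter n ph x) \/
  exists2 o, iter n graft (inr x) = inl o & fconnect q a o.
Proof.
elim: n => [|n [IH|[o IH ao]]]; first by left.
- rewrite iterS IH /=; case: eqP => _; [right; exists a|left] => //.
- right; exists (q o); first by rewrite iterS IH.
  exact: connect_trans ao (fconnect1 _ _).
Qed.

Lemma fconnect_graft_inr x y : fconnect ph x y -> fconnect graft (inr x) (inr y).
Proof.
case/fconnect_iterP => n <-; elim: n => //= n IH.
case: (eqVneq (iter n ph x) h) => [e|ne]; first by rewrite e ph_root -e.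
by apply: connect_trans IH (connect1 _); rewrite /= (negPf ne).
Qed.

Lemma anc_graft_ll o o' : anc graft (inl o) (inl o') = anc q o o'.
Proof.
rewrite !anc_fconnect.
apply/fconnect_iterP/fconnect_iterP => -[n e]; exists n.
  by move: e; rewrite iter_graft_inl => -[].
by rewrite iter_graft_inl e.
Qed.

Lemma anc_graft_rl x o : anc graft (inr x) (inl o) = false.
Proof.
apply/negbTE; rewrite anc_fconnect.
by apply/fconnect_iterP => -[n]; rewrite iter_graft_inl.
Qed.

Lemma anc_graft_rr x x' : anc graft (inr x) (inr x') = anc ph x x'.
Proof.
rewrite !anc_fconnect; apply/idP/idP; last exact: fconnect_graft_inr.
case/fconnect_iterP => n; case: (iter_graft_inr n x') => [-> [<-]|[o -> //]].
exact: fconnect_iter.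
Qed.

Lemma anc_graft_lr o x : anc graft (inl o) (inr x) = anc q o a.
Proof.
rewrite !anc_fconnect; apply/idP/idP.
  by case/fconnect_iterP => n; case: (iter_graft_inr n x) => [->|[o' -> ao' [<-]]].
move=> ao; apply: connect_trans (fconnect_graft_inr (to_root x)) _.
apply: connect_trans (connect1 _) _; first by rewrite /= eqxx.
by rewrite -anc_fconnect anc_graft_ll anc_fconnect.
Qed.

Lemma forall_sum (P : pred (O + H)) :
  [forall c, P c] = [forall o, P (inl o)] && [forall x, P (inr x)].
Proof.
apply/forallP/andP => [all_c|[/forallP all_o /forallP all_x] [o|x] //].
by split; apply/forallP.
Qed.

Lemma is_inf_graft_ll y y' w : is_inf graft (inl y) (inl y') (inl w) = is_inf q y y' w.
Proof.
rewrite /is_inf forall_sum !anc_graft_ll; congr [&& _, _ & _].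
rewrite [X in _ && X](_ : _ = true) ?andbT; last first.
  by apply/forallP => x; rewrite anc_graft_rl.
by apply: eq_forallb => z; rewrite !anc_graft_ll.
Qed.

Lemma is_inf_graft_rr z z' w : is_inf graft (inr z) (inr z') (inr w) = is_inf ph z z' w.
Proof.
rewrite /is_inf forall_sum !anc_graft_rr; congr [&& _, _ & _].
rewrite [X in X && _](_ : _ = true); last first.
  by apply/forallP => o; rewrite !anc_graft_lr andbb implybb.
by apply: eq_forallb => x; rewrite !anc_graft_rr.
Qed.

(* Two vertices of H have their infimum in H, since [h] is a common ancestor. *)
Lemma is_inf_graft_rrl z z' w : is_inf graft (inr z) (inr z') (inl w) = false.
Proof.
apply/negbTE/negP => /and3P[_ _ /forallP/(_ (inr h))].
by rewrite !anc_graft_rr anc_graft_rl !anc_fconnect !to_root.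
Qed.

Lemma is_inf_graft_lrl y z w : is_inf graft (inl y) (inr z) (inl w) = is_inf q y a w.
Proof.
rewrite /is_inf forall_sum anc_graft_ll anc_graft_lr; congr [&& _, _ & _].
rewrite [X in _ && X](_ : _ = true) ?andbT; last first.
  by apply/forallP => x; rewrite anc_graft_rl.
by apply: eq_forallb => x; rewrite anc_graft_ll anc_graft_lr anc_graft_ll.
Qed.

Lemma is_inf_graft_lrr y z w : is_inf graft (inl y) (inr z) (inr w) = false.
Proof. by rewrite /is_inf anc_graft_rl. Qed.

Lemma is_inf_graft_llr y y' w : is_inf graft (inl y) (inl y') (inr w) = false.
Proof. by rewrite /is_inf anc_graft_rl. Qed.

Definition closed_at_a (Y : {set O}) :=
  [forall y in Y, forall w, is_inf q y a w ==> (w \in Y)].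

Definition glue (Y : {set O}) (Z : {set H}) : {set O + H} :=
  [set c | match c with inl o => o \in Y | inr x => x \in Z end].

Lemma inf_closed_glue Y Z :
  inf_closed graft (glue Y Z) =
  [&& inf_closed q Y, inf_closed ph Z & (Z == set0) || closed_at_a Y].
Proof.
apply/inf_closedP/and3P => [cl|[/inf_closedP clY /inf_closedP clZ YZ]].
  split.
  - apply/inf_closedP => u v w uY vY inf_w.
    by have := cl (inl u) (inl v) (inl w); rewrite !inE is_inf_graft_ll; apply.
  - apply/inf_closedP => u v w uZ vZ inf_w.
    by have := cl (inr u) (inr v) (inr w); rewrite !inE is_inf_graft_rr; apply.
  - have [->|[z zZ]] := set_0Vmem Z; first by rewrite eqxx.
    apply/orP; right; apply/forallP => y; apply/implyP => yY.
    apply/forallP => w; apply/implyP => inf_w.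
    by have := cl (inl y) (inr z) (inl w); rewrite !inE is_inf_graft_lrl; apply.
have at_a y z w : y \in Y -> z \in Z -> is_inf q y a w -> w \in Y.
  case/orP: YZ => [/eqP-> _|/forallP/(_ y) cl_y yY _]; first by rewrite inE.
  by move: cl_y; rewrite yY => /forallP/(_ w)/implyP.
move=> [u|u] [v|v] [w|w]; rewrite !inE;
  rewrite ?is_inf_graft_ll ?is_inf_graft_llr ?is_inf_graft_rr ?is_inf_graft_rrl
    ?is_inf_graft_lrl ?is_inf_graft_lrr //.
- exact: clY.
- exact: at_a.
- by rewrite is_infC is_inf_graft_lrl => uZ vY; apply: at_a vY uZ.
- by rewrite is_infC is_inf_graft_lrr.
- exact: clZ.
Qed.

Definition n_not_closed_at_a := \sum_(Y : {set O}) (inf_closed q Y && ~~ closed_at_a Y).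
Definition n_closed_at_a := \sum_(Y : {set O}) (inf_closed q Y && closed_at_a Y).

Lemma n_closed_at_a_gt0 : 0 < n_closed_at_a.
Proof.
rewrite /n_closed_at_a (bigD1 set0) //= inf_closed0 /=.
by have -> : closed_at_a set0 by apply/forallP => y; rewrite inE.
Qed.

Lemma n_inf_closed_graft :
  n_inf_closed graft = n_not_closed_at_a + n_closed_at_a * n_inf_closed ph.
Proof.
rewrite n_inf_closed_sum (reindex (fun YZ : {set O} * {set H} => glue YZ.1 YZ.2)) /=;
  last first.
  exists (fun X : {set O + H} => ([set o | inl o \in X], [set x | inr x \in X])).
    by move=> [Y Z] _; congr (_, _); apply/setP => x; rewrite !inE.
  by move=> X _; apply/setP => [[o|x]]; rewrite !inE.
rewrite -(pair_big xpredT xpredT (fun Y Z => nat_of_bool (inf_closed graft (glue Y Z)))) /=.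
rewrite n_inf_closed_sum big_distrl -big_split /=; apply: eq_bigr => Y _.
under eq_bigr do rewrite inf_closed_glue.
case: (inf_closed q Y) => /=; last by rewrite big1 // mul0n.
case: (closed_at_a Y) => /=.
  by rewrite mul1n; apply: eq_bigr => Z _; rewrite orbT andbT.
rewrite mul0n addn0 (bigD1 set0) //= eqxx inf_closed0 big1 // => Z nZ.
by rewrite orbF (negbTE nZ) andbF.
Qed.

End Graft.

Lemma graft_rtree (O H : finType) (q : O -> O) (rO a : O) (ph : H -> H) (h : H) :
  is_rtree rO q -> is_rtree h ph -> is_rtree (inl rO) (graft q a ph h).
Proof.
move=> /rtreeP[q_root O_to_root] /rtreeP[ph_root H_to_root].
apply/rtreeP; split; first by rewrite /= q_root.
by move=> [o|x]; rewrite -anc_fconnect ?anc_graft_ll ?anc_graft_lr // anc_fconnect.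
Qed.

Lemma graft_cancel (O H1 H2 : finType) (q : O -> O) (a : O)
    (ph1 : H1 -> H1) (h1 : H1) (ph2 : H2 -> H2) (h2 : H2) :
  is_rtree h1 ph1 -> is_rtree h2 ph2 ->
  n_inf_closed (graft q a ph1 h1) <= n_inf_closed (graft q a ph2 h2) ->
  n_inf_closed ph1 <= n_inf_closed ph2.
Proof.
move=> /rtreeP[root1 to_root1] /rtreeP[root2 to_root2].
rewrite !n_inf_closed_graft // leq_add2l.
by rewrite leq_pmul2l // n_closed_at_a_gt0.
Qed.

Section Branch.
Variables (T : finType) (p : T -> T) (v : T).
Local Notation branch := (branch_type p v).
Local Notation broot := (branch_root p v).
Local Notation bparent := (@branch_parent T p v).

Lemma anc_parent_in u : anc p v u -> u != v -> anc p v (p u).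
Proof.
rewrite !anc_fconnect => /fconnect_iterP[[|n] /= e] ne_uv; first by rewrite e eqxx in ne_uv.
by apply/fconnect_iterP; exists n; rewrite -iterSr.
Qed.

Lemma anc_parent_out u : ~~ anc p v u -> ~~ anc p v (p u).
Proof. by apply: contra; rewrite !anc_fconnect; apply: connect_trans (fconnect1 _ _). Qed.

Lemma branch_parent_val u : val (bparent u) = if val u == v then v else p (val u).
Proof.
rewrite /branch_parent insubdK //; case: eqP => [_|/eqP ne_uv]; first exact: anc_refl.
exact: anc_parent_in (valP u) ne_uv.
Qed.

Lemma branch_rtree : is_rtree broot bparent.
Proof.
apply/rtreeP; split; first by apply: val_inj; rewrite branch_parent_val /= eqxx.
move=> u; have /fconnect_iterP[n] := etrans (esym (anc_fconnect _ _ _)) (valP u).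
elim: n u => [|n IH] u /= e; first by rewrite (_ : u = broot) //; apply: val_inj.
have [uv|ne_uv] := eqVneq (val u) v; first by rewrite (_ : u = broot) //; apply: val_inj.
apply: connect_trans (fconnect1 _ _) (IH _ _).
by rewrite branch_parent_val (negbTE ne_uv) -iterSr.
Qed.

Definition compl_type := {u : T | ~~ anc p v u}.

Definition compl_parent (o : compl_type) : compl_type :=
  exist _ (p (val o)) (anc_parent_out (valP o)).

Lemma iter_compl_parent n o : val (iter n compl_parent o) = iter n p (val o).
Proof. by elim: n => //= n ->. Qed.

Section RootBranch.
Hypotheses (p_root : p v = v) (to_root : forall x, fconnect p x v).

Lemma in_root_branch u : anc p v u.
Proof. by rewrite anc_fconnect. Qed.

Lemma insubd_branchK : cancel (insubd broot) val.
Proof. by move=> u; rewrite insubdK //; apply: in_root_branch. Qed.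

Lemma card_root_branch : #|branch| = #|T|.
Proof. exact: bij_eq_card (Bijective (valKd broot) insubd_branchK). Qed.

Lemma n_inf_closed_root_branch : n_inf_closed bparent = n_inf_closed p.
Proof.
apply/esym/(n_inf_closed_iso (valKd broot) insubd_branchK) => u.
by rewrite branch_parent_val; case: eqP => // ->.
Qed.

End RootBranch.

Section ProperBranch.
Variable r : T.
Hypotheses (p_root : p r = r) (to_root : forall x, fconnect p x r) (ne_vr : v != r).

(* Outside a proper branch lie the root and the parent of [v]; the latter
   because a vertex on a cycle of [p] can only be the root. *)
Lemma root_outside : ~~ anc p v r.
Proof.
rewrite anc_fconnect; apply/fconnect_iterP => -[n].
by rewrite iter_fixed // => e; move: ne_vr; rewrite e eqxx.
Qed.

Lemma parent_outside : ~~ anc p v (p v).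
Proof.
apply/negP; rewrite anc_fconnect => /fconnect_iterP[n e].
have period : iter n.+1 p v = v by rewrite iterSr.
have periodic m : iter (m * n.+1) p v = v.
  by elim: m => // m IH; rewrite mulSn iterD IH period.
have := periodic (findex p v r).
rewrite mulnS addnC iterD iter_findex // iter_fixed // => e_rv.
by move: ne_vr; rewrite e_rv eqxx.
Qed.

Definition compl_root : compl_type := exist _ r root_outside.
Definition attach : compl_type := exist _ (p v) parent_outside.

Lemma compl_rtree : is_rtree compl_root compl_parent.
Proof.
apply/rtreeP; split; first by apply: val_inj; rewrite /= p_root.
move=> o; have /fconnect_iterP[n e] := to_root (val o).
by apply/fconnect_iterP; exists n; apply: val_inj; rewrite iter_compl_parent.
Qed.

Definition to_graft (u : T) : compl_type + branch :=
  if anc p v u then inr (insubd broot u) else inl (insubd compl_root u).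

Definition of_graft (c : compl_type + branch) : T :=
  match c with inl o => val o | inr x => val x end.

Lemma to_graftK : cancel to_graft of_graft.
Proof. by move=> u; rewrite /to_graft; case: ifPn => in_u; rewrite /= insubdK. Qed.

Lemma of_graftK : cancel of_graft to_graft.
Proof. by move=> [o|x]; rewrite /to_graft /= ?(negbTE (valP o)) ?(valP x) valKd. Qed.

Lemma card_decomposition : #|{: compl_type + branch}| = #|T|.
Proof. exact: esym (bij_eq_card (Bijective to_graftK of_graftK)). Qed.

Lemma to_graft_parent u :
  to_graft (p u) = graft compl_parent attach bparent broot (to_graft u).
Proof.
rewrite /to_graft; case: (boolP (anc p v u)) => [in_u|out_u]; last first.
  rewrite (negbTE (anc_parent_out out_u)); congr inl; apply: val_inj.
  by rewrite /= !insubdK //; apply: anc_parent_out.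
have [-> |ne_uv] := eqVneq u v.
  rewrite (negbTE parent_outside) /= (_ : insubd broot v = broot) ?eqxx.
    by congr inl; apply: val_inj; rewrite /= insubdK //; apply: parent_outside.
  by apply: val_inj; rewrite insubdK //; apply: anc_refl.
have ne_broot : (insubd broot u == broot) = false.
  by apply: contraNF ne_uv => /eqP/(congr1 val); rewrite /= insubdK // => ->.
rewrite anc_parent_in //= ne_broot; congr inr; apply: val_inj.
rewrite branch_parent_val [val (insubd broot u)]insubdK // (negbTE ne_uv).
by rewrite insubdK //; apply: anc_parent_in.
Qed.

Lemma n_inf_closed_decomposition :
  n_inf_closed (graft compl_parent attach bparent broot) = n_inf_closed p.
Proof. exact: n_inf_closed_iso to_graftK of_graftK to_graft_parent. Qed.

End ProperBranch.
End Branch.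

(* A branch of a minimal tree competes against an arbitrary tree T' of its
   size: grafting T' in its place gives a tree of the size of T, which has at
   least as many infima closed sets as T; by [graft_cancel] the branch has at
   most as many as T'. *)
Theorem lemma2p1 (T : finType) (r : T) (p : T -> T) (v : T) :
  minimal r p -> minimal (branch_root p v) (@branch_parent T p v).
Proof.
case=> T_tree T_min; split; first exact: branch_rtree.
move=> T' r' p' T'_tree card_T'; rewrite leq_I_n_inf_closed.
have [p_root to_root] := (rtreeP _ _).1 T_tree.
have [v_root|ne_vr] := eqVneq v r.
  subst r; rewrite n_inf_closed_root_branch // -leq_I_n_inf_closed.
  by apply: T_min T'_tree _; rewrite card_T' card_root_branch.
apply: (graft_cancel (q := @compl_parent T p v) (a := attach p_root to_root ne_vr)
  (branch_rtree p v) T'_tree).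
rewrite n_inf_closed_decomposition -leq_I_n_inf_closed.
apply: T_min; first exact: graft_rtree (compl_rtree p_root to_root ne_vr) T'_tree.
by rewrite -(card_decomposition p_root ne_vr) !card_sum card_T'.
Qed.
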